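(* Let $n\ge3$, $m_1,\dots,m_n>0$, and let the configuration $\theta_i=\pi/2$, $\varphi_i=\varphi_i^0$ ($i=1,\dots,n$) on the equator be a fixed point. Let $\omega\in\mathbb R$, let $X_\omega$ be the point $\theta_i=\pi/2$, $\varphi_i=\varphi_i^0$, $p_{\theta_i}=0$, $p_{\varphi_i}=\omega m_i$, and let $L$ be the Jacobian matrix at $X_\omega$ of the vector field of the rotating system below, with variables ordered as $(\theta_1,\dots,\theta_n,\varphi_1,\dots,\varphi_n,p_{\theta_1},\dots,p_{\theta_n},p_{\varphi_1},\dots,p_{\varphi_n})$. Then $$L=\begin{bmatrix}0&0&M^{-1}&0\\0&0&0&M^{-1}\\H_\omega&0&0&0\\0&G&0&0\end{bmatrix},$$ where $M=\mathrm{diag}(m_1,\dots,m_n)$, $H_\omega=H-\omega^2M$, $H=\big[\frac{\partial^2V}{\partial\theta_i\partial\theta_j}\big]$ and $G=\big[\frac{\partial^2V}{\partial\varphi_i\partial\varphi_j}\big]$ evaluated at the configuration, and these have entries $$H_{ij}=\frac{m_im_j}{\sin^3d_{ij}},\quad H_{ii}=-\sum_{j\neq i}H_{ij}\cos d_{ij},\quad G_{ij}=\frac{-2m_im_j\cos d_{ij}}{\sin^3 d_{ij}},\quad G_{ii}=-\sum_{j\neq i}G_{ij}\qquad(i\neq j).$$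
   Context: Positions on the unit sphere: $\mathbf q_i=(\sin\theta_i\cos\varphi_i,\sin\theta_i\sin\varphi_i,\cos\theta_i)$; $d_{ij}=\arccos(\mathbf q_i\cdot\mathbf q_j)$; the force function is $V=\sum_{i<j}m_im_j\cot d_{ij}$ on $W=\{d_{ij}\notin\{0,\pi\},\ i\ne j\}\subset(\mathbb S^2)^n$, and $U=-V$. A fixed point is a critical point of $V$ on $W$. The rotating system (the $n$-body problem on $\mathbb S^2$ written in coordinates rotating about the $z$-axis with angular velocity $\omega$) is: for $i=1,\dots,n$, $\dot\theta_i=\frac{p_{\theta_i}}{m_i}$, $\dot\varphi_i=\frac{p_{\varphi_i}}{m_i\sin^2\theta_i}-\omega$, $\dot p_{\theta_i}=\frac{p_{\varphi_i}^2\cos\theta_i}{m_i\sin^3\theta_i}-\frac{\partial U}{\partial\theta_i}$, $\dot p_{\varphi_i}=-\frac{\partial U}{\partial\varphi_i}$. The point $X_\omega$ is a rest point of this system (it corresponds to the relative equilibrium obtained by rotating the fixed point uniformly with angular velocity $\omega$). *)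

From Stdlib Require Import Reals Lra.
From Coquelicot Require Import Coquelicot.
Open Scope R_scope.

Fixpoint sumR (n : nat) (f : nat -> R) : R :=
  match n with O => 0 | S k => sumR k f + f k end.

Definition upd (x : nat -> R) (i : nat) (t : R) : nat -> R :=
  fun k => if Nat.eqb k i then t else x k.

(* q_i . q_j for positions on the unit sphere given by angles theta, phi. *)
Definition qdot (th ph : nat -> R) (i j : nat) : R :=
  sin (th i) * cos (ph i) * (sin (th j) * cos (ph j))
  + sin (th i) * sin (ph i) * (sin (th j) * sin (ph j))
  + cos (th i) * cos (th j).

Definition sdist (th ph : nat -> R) (i j : nat) : R := acos (qdot th ph i j).

Definition Vpot (n : nat) (m : nat -> R) (th ph : nat -> R) : R :=
  sumR n (fun i => sumR n (fun j =>
    if Nat.ltb i j then m i * m j * (cos (sdist th ph i j) / sin (sdist th ph i j))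
    else 0)).

Definition Upot (n : nat) (m : nat -> R) (th ph : nat -> R) : R :=
  - Vpot n m th ph.

Definition dth (F : (nat -> R) -> (nat -> R) -> R) (i : nat) (th ph : nat -> R) : R :=
  Derive (fun s => F (upd th i s) ph) (th i).
Definition dph (F : (nat -> R) -> (nat -> R) -> R) (i : nat) (th ph : nat -> R) : R :=
  Derive (fun s => F th (upd ph i s)) (ph i).

(* Phase-space points are vectors X : nat -> R with ordering
   (theta_1..theta_n, phi_1..phi_n, p_theta_1..p_theta_n, p_phi_1..p_phi_n),
   i.e. theta_i = X i, phi_i = X (n+i), p_theta_i = X (2n+i), p_phi_i = X (3n+i)
   (0-based indices i < n). *)
Definition thetas (n : nat) (X : nat -> R) : nat -> R := fun i => X i.
Definition phis (n : nat) (X : nat -> R) : nat -> R := fun i => X (n + i)%nat.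
Definition pths (n : nat) (X : nat -> R) : nat -> R := fun i => X (2 * n + i)%nat.
Definition pphs (n : nat) (X : nat -> R) : nat -> R := fun i => X (3 * n + i)%nat.

Definition rotfield (n : nat) (m : nat -> R) (w : R) (X : nat -> R) (k : nat) : R :=
  let th := thetas n X in let ph := phis n X in
  let pt := pths n X in let pp := pphs n X in
  let i := Nat.modulo k n in
  match Nat.div k n with
  | 0%nat => pt i / m i
  | 1%nat => pp i / (m i * sin (th i) ^ 2) - w
  | 2%nat => pp i ^ 2 * cos (th i) / (m i * sin (th i) ^ 3) - dth (Upot n m) i th ph
  | 3%nat => - dph (Upot n m) i th ph
  | _ => 0
  end.

Definition Hoff (m : nat -> R) (d : nat -> nat -> R) (i j : nat) : R :=
  m i * m j / sin (d i j) ^ 3.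
Definition Hexp (n : nat) (m : nat -> R) (d : nat -> nat -> R) (i j : nat) : R :=
  if Nat.eqb i j then
    - sumR n (fun l => if Nat.eqb l i then 0 else Hoff m d i l * cos (d i l))
  else Hoff m d i j.
Definition Goff (m : nat -> R) (d : nat -> nat -> R) (i j : nat) : R :=
  -2 * m i * m j * cos (d i j) / sin (d i j) ^ 3.
Definition Gexp (n : nat) (m : nat -> R) (d : nat -> nat -> R) (i j : nat) : R :=
  if Nat.eqb i j then
    - sumR n (fun l => if Nat.eqb l i then 0 else Goff m d i l)
  else Goff m d i j.

Definition Lblock (n : nat) (m : nat -> R) (d : nat -> nat -> R) (w : R)
  (k l : nat) : R :=
  let i := Nat.modulo k n in let j := Nat.modulo l n in
  match Nat.div k n, Nat.div l n with
  | 0%nat, 2%nat => if Nat.eqb i j then / m i else 0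
  | 1%nat, 3%nat => if Nat.eqb i j then / m i else 0
  | 2%nat, 0%nat => Hexp n m d i j - w ^ 2 * (if Nat.eqb i j then m i else 0)
  | 3%nat, 1%nat => Gexp n m d i j
  | _, _ => 0
  end.

From Stdlib Require Import Reals Lra Lia FunctionalExtensionality.
From Coquelicot Require Import Coquelicot.
Open Scope R_scope.

(* Write V = sum_{a<b} m_a m_b f(q_a . q_b) with f(c) = cot (arccos c) = c / sqrt (1 - c^2);
   then f'(c) = 1 / sin^3 d and f''(c) (1 - c^2) = 3 c f'(c), where d = arccos c.
   On the equator q_a . q_b = cos (phi_a - phi_b) and its theta-derivatives vanish
   identically in phi, so the mixed theta/phi second derivatives of V vanish. In the
   theta-Hessian only the second derivatives of q_a . q_b survive, giving
   m_i m_j / sin^3 d_ij and -sum_l m_i m_l cos d_il / sin^3 d_il; in the phi-Hessian the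
   two chain-rule terms combine through f'' (1 - c^2) = 3 c f' into -2 m_i m_j cos d_ij / sin^3 d_ij.
   The Jacobian of the rotating field is then read off componentwise at theta = pi/2,
   p_theta = 0, p_phi = w m_i, where cos theta = 0 kills every other contribution. *)

Definition kron (i j : nat) : R := if Nat.eqb i j then 1 else 0.

Lemma kron_refl i : kron i i = 1.
Proof. unfold kron. rewrite Nat.eqb_refl. reflexivity. Qed.

Lemma kron_neq i j : i <> j -> kron i j = 0.
Proof. intros H. unfold kron. destruct (Nat.eqb_spec i j); [contradiction|reflexivity]. Qed.

Lemma sumR_ext n f g : (forall k, (k < n)%nat -> f k = g k) -> sumR n f = sumR n g.
Proof.
  induction n as [|n IH]; intros H; simpl; auto.
  rewrite IH by (intros; apply H; lia). rewrite H by lia. reflexivity.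
Qed.

Lemma sumR_plus n f g : sumR n (fun k => f k + g k) = sumR n f + sumR n g.
Proof. induction n as [|n IH]; simpl; [lra|]. rewrite IH. lra. Qed.

Lemma sumR_opp n f : sumR n (fun k => - f k) = - sumR n f.
Proof. induction n as [|n IH]; simpl; [lra|]. rewrite IH. lra. Qed.

Lemma sumR_eq0 n f : (forall k, (k < n)%nat -> f k = 0) -> sumR n f = 0.
Proof.
  intros H. rewrite (sumR_ext n f (fun _ => 0)) by auto.
  clear. induction n as [|n IH]; simpl; [|rewrite IH]; ring.
Qed.

Lemma sumR_if_eq n j x : (j < n)%nat -> sumR n (fun k => if Nat.eqb k j then x else 0) = x.
Proof.
  induction n as [|n IH]; simpl; intros Hj; [lia|].
  destruct (Nat.eqb_spec n j) as [->|Hnj].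
  - rewrite sumR_eq0; [lra|]. intros k Hk. destruct (Nat.eqb_spec k j); [lia|reflexivity].
  - rewrite IH by lia. lra.
Qed.

Lemma sumR_star_kron n i j (c g : nat -> R) : (j < n)%nat ->
  sumR n (fun l => if Nat.eqb l i then 0 else (kron l j - kron i j * c l) * g l) =
  if Nat.eqb i j then - sumR n (fun l => if Nat.eqb l i then 0 else c l * g l) else g j.
Proof.
  intros Hj. unfold kron. destruct (Nat.eqb_spec i j) as [<-|Hij].
  - rewrite <- sumR_opp. apply sumR_ext. intros l _.
    destruct (Nat.eqb_spec l i); ring.
  - rewrite <- (sumR_if_eq n j (g j)) by auto. apply sumR_ext. intros l _.
    destruct (Nat.eqb_spec l i); destruct (Nat.eqb_spec l j); subst; try lia; ring.
Qed.

Lemma is_derive_sumR n (f : R -> nat -> R) (f' : nat -> R) x :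
  (forall k, (k < n)%nat -> is_derive (fun t => f t k) x (f' k)) ->
  is_derive (fun t => sumR n (f t)) x (sumR n f').
Proof.
  induction n as [|n IH]; simpl; intros H.
  - apply (is_derive_const 0).
  - apply (is_derive_plus (fun t => sumR n (f t)) (fun t => f t n)).
    + apply IH. intros; apply H; lia.
    + apply H; lia.
Qed.

Definition pairsum (n : nat) (f : nat -> nat -> R) : R :=
  sumR n (fun a => sumR n (fun b => if Nat.ltb a b then f a b else 0)).

Lemma pairsum_ext n f g : (forall a b, (a < b)%nat -> (b < n)%nat -> f a b = g a b) ->
  pairsum n f = pairsum n g.
Proof.
  intros H. apply sumR_ext. intros a _. apply sumR_ext. intros b Hb.
  destruct (Nat.ltb_spec a b); auto.
Qed.

Lemma pairsum_eq0 n f : (forall a b, (a < b)%nat -> (b < n)%nat -> f a b = 0) -> pairsum n f = 0.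
Proof.
  intros H. apply sumR_eq0. intros a _. apply sumR_eq0. intros b Hb.
  destruct (Nat.ltb_spec a b); auto.
Qed.

Lemma is_derive_pairsum n (f : R -> nat -> nat -> R) (f' : nat -> nat -> R) x :
  (forall a b, (a < b)%nat -> (b < n)%nat -> is_derive (fun t => f t a b) x (f' a b)) ->
  is_derive (fun t => pairsum n (f t)) x (pairsum n f').
Proof.
  intros H. apply (is_derive_sumR n (fun t a => sumR n (fun b => if Nat.ltb a b then f t a b else 0))).
  intros a _. apply (is_derive_sumR n (fun t b => if Nat.ltb a b then f t a b else 0)).
  intros b Hb. destruct (Nat.ltb_spec a b); [apply H; auto|apply (is_derive_const 0)].
Qed.

Lemma pairsum_star n i f : (i < n)%nat -> (forall a b, f a b = f b a) ->
  (forall a b, a <> i -> b <> i -> f a b = 0) ->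
  pairsum n f = sumR n (fun l => if Nat.eqb l i then 0 else f i l).
Proof.
  intros Hi Hsym Hsupp.
  transitivity (sumR n (fun a => (if Nat.eqb a i then sumR n (fun b => if Nat.ltb i b then f i b else 0) else 0)
                                 + (if Nat.ltb a i then f a i else 0))).
  - apply sumR_ext. intros a _. destruct (Nat.eqb_spec a i) as [->|Hai].
    + rewrite Nat.ltb_irrefl. ring.
    + rewrite <- (sumR_if_eq n i (if Nat.ltb a i then f a i else 0)) by auto.
      rewrite Rplus_0_l. apply sumR_ext. intros b _.
      destruct (Nat.eqb_spec b i) as [->|Hbi]; auto.
      rewrite Hsupp by auto. destruct (Nat.ltb a b); auto.
  - rewrite sumR_plus, sumR_if_eq, <- sumR_plus by auto. apply sumR_ext. intros l _.
    rewrite (Hsym l i).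
    destruct (Nat.eqb_spec l i); destruct (Nat.ltb_spec i l); destruct (Nat.ltb_spec l i); try lia; ring.
Qed.

Lemma is_derive_eq (f : R -> R) (x l l' : R) : is_derive f x l -> l = l' -> is_derive f x l'.
Proof. intros H <-. exact H. Qed.

Lemma is_derive_comp_R (f g : R -> R) (x df dg : R) :
  is_derive f (g x) df -> is_derive g x dg -> is_derive (fun t => f (g t)) x (df * dg).
Proof.
  intros Hf Hg. apply (is_derive_eq _ _ (scal dg df)).
  - exact (is_derive_comp f g x df dg Hf Hg).
  - unfold scal; simpl; unfold mult; simpl. ring.
Qed.

Lemma is_derive_shift (f : R -> R) (x l : R) : is_derive f x l -> is_derive (fun t => f (x + t)) 0 l.
Proof.
  intros H. apply (is_derive_eq _ _ (l * 1)); [|ring].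
  apply (is_derive_comp_R f (fun t => x + t)).
  - rewrite Rplus_0_r. exact H.
  - auto_derive; auto.
Qed.

Lemma is_derive_sub (f g : R -> R) (x df dg : R) :
  is_derive f x df -> is_derive g x dg -> is_derive (fun t => f t - g t) x (df - dg).
Proof. exact (is_derive_minus f g x df dg). Qed.

Lemma is_derive_neg (f : R -> R) (x df : R) : is_derive f x df -> is_derive (fun t => - f t) x (- df).
Proof. exact (is_derive_opp f x df). Qed.

(** * The function cot (arccos c) *)

Definition cot_acos (c : R) : R := c / sqrt (1 - c * c).
Definition dcot_acos (c : R) : R := / sqrt (1 - c * c) ^ 3.
Definition d2cot_acos (c : R) : R := 3 * c / sqrt (1 - c * c) ^ 5.

(* Also at |c| >= 1, where acos c is 0 or PI and both sides are junk divisions by 0. *)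
Lemma cos_acos_div_sin_acos c : cos (acos c) / sin (acos c) = cot_acos c.
Proof.
  unfold cot_acos. destruct (Rle_dec c (-1)) as [H|H].
  - unfold acos. destruct (Rle_dec c (-1)); [|lra].
    rewrite cos_PI, sin_PI, sqrt_neg_0 by nra. unfold Rdiv. rewrite Rinv_0. ring.
  - destruct (Rle_dec 1 c) as [H1|H1].
    + unfold acos. destruct (Rle_dec c (-1)); [lra|]. destruct (Rle_dec 1 c); [|lra].
      rewrite cos_0, sin_0, sqrt_neg_0 by nra. unfold Rdiv. rewrite !Rinv_0. ring.
    + rewrite cos_acos, sin_acos by lra. reflexivity.
Qed.

Lemma sqrt_1_minus_sq c : -1 < c < 1 ->
  0 < 1 - c * c /\ 0 < sqrt (1 - c * c) /\ sqrt (1 - c * c) * sqrt (1 - c * c) = 1 - c * c.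
Proof.
  intros Hc. assert (Hp : 0 < 1 - c * c) by nra.
  repeat split; [lra | apply sqrt_lt_R0 | apply sqrt_sqrt]; lra.
Qed.

Lemma is_derive_cot_acos c : -1 < c < 1 -> is_derive cot_acos c (dcot_acos c).
Proof.
  intros Hc. destruct (sqrt_1_minus_sq c Hc) as [Hp [Hs Hss]].
  unfold cot_acos, dcot_acos. auto_derive; replace (1 + - (c * c)) with (1 - c * c) by ring.
  - repeat split; lra.
  - set (s := sqrt (1 - c * c)) in *. clearbody s.
    field_simplify; [|lra..].
    replace (2 * s ^ 2 + 2 * c ^ 2) with 2 by (simpl; lra). field. lra.
Qed.

Lemma is_derive_dcot_acos c : -1 < c < 1 -> is_derive dcot_acos c (d2cot_acos c).
Proof.
  intros Hc. destruct (sqrt_1_minus_sq c Hc) as [Hp [Hs Hss]].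
  unfold dcot_acos, d2cot_acos. auto_derive; replace (1 + - (c * c)) with (1 - c * c) by ring.
  - repeat split; try lra. apply Rgt_not_eq. repeat apply Rmult_lt_0_compat; lra.
  - set (s := sqrt (1 - c * c)) in *. field. lra.
Qed.

Lemma inv_sin_acos_cube c : -1 < c < 1 -> / sin (acos c) ^ 3 = dcot_acos c.
Proof. intros Hc. rewrite sin_acos by lra. reflexivity. Qed.

Lemma d2cot_acos_mul c : -1 < c < 1 -> d2cot_acos c * (1 - c * c) = 3 * c * dcot_acos c.
Proof.
  intros Hc. destruct (sqrt_1_minus_sq c Hc) as [_ [Hs Hss]].
  unfold d2cot_acos, dcot_acos. set (s := sqrt (1 - c * c)) in *.
  rewrite <- Hss. field. lra.
Qed.

(** * The potential and its gradient *)

Lemma upd_same (x : nat -> R) i : upd x i (x i) = x.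
Proof.
  apply functional_extensionality. intros k. unfold upd.
  destruct (Nat.eqb_spec k i); subst; reflexivity.
Qed.

Lemma qdot_spherical th ph a b :
  qdot th ph a b = sin (th a) * sin (th b) * cos (ph a - ph b) + cos (th a) * cos (th b).
Proof. unfold qdot. rewrite cos_minus. ring. Qed.

Definition qdot_th (th ph : nat -> R) (i a b : nat) : R :=
  kron a i * (cos (th a) * sin (th b) * cos (ph a - ph b) - sin (th a) * cos (th b))
  + kron b i * (sin (th a) * cos (th b) * cos (ph a - ph b) - cos (th a) * sin (th b)).

Definition qdot_ph (th ph : nat -> R) (i a b : nat) : R :=
  (kron b i - kron a i) * (sin (th a) * sin (th b) * sin (ph a - ph b)).

Lemma is_derive_qdot_th th ph i a b : a <> b ->
  is_derive (fun s => qdot (upd th i s) ph a b) (th i) (qdot_th th ph i a b).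
Proof.
  intros Hab. apply (is_derive_ext (fun s =>
    sin (upd th i s a) * sin (upd th i s b) * cos (ph a - ph b) + cos (upd th i s a) * cos (upd th i s b))).
  { intros s. symmetry. apply qdot_spherical. }
  unfold qdot_th, upd, kron.
  destruct (Nat.eqb_spec a i); destruct (Nat.eqb_spec b i); subst; try lia;
    auto_derive; auto; ring.
Qed.

Lemma is_derive_qdot_ph th ph i a b : a <> b ->
  is_derive (fun s => qdot th (upd ph i s) a b) (ph i) (qdot_ph th ph i a b).
Proof.
  intros Hab. apply (is_derive_ext (fun s =>
    sin (th a) * sin (th b) * cos (upd ph i s a - upd ph i s b) + cos (th a) * cos (th b))).
  { intros s. symmetry. apply qdot_spherical. }
  unfold qdot_ph, upd, kron.
  destruct (Nat.eqb_spec a i); destruct (Nat.eqb_spec b i); subst; try lia;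
    auto_derive; auto; unfold Rminus; ring.
Qed.

(* The condition d_ab <> 0, PI of W, stated on cos d_ab = q_a . q_b. *)
Definition in_W (n : nat) (th ph : nat -> R) : Prop :=
  forall a b, (a < n)%nat -> (b < n)%nat -> a <> b -> -1 < qdot th ph a b < 1.

Lemma in_W_of_sdist n th ph :
  (forall a b, (a < n)%nat -> (b < n)%nat -> a <> b ->
     sdist th ph a b <> 0 /\ sdist th ph a b <> PI) ->
  in_W n th ph.
Proof.
  intros H a b Ha Hb Hab. destruct (H a b Ha Hb Hab) as [H0 Hpi].
  unfold sdist, acos in H0, Hpi.
  destruct (Rle_dec (qdot th ph a b) (-1)); [congruence|].
  destruct (Rle_dec 1 (qdot th ph a b)); [congruence|]. lra.
Qed.

Lemma locally_forall_lt (P : nat -> R -> Prop) n x :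
  (forall k, (k < n)%nat -> locally x (P k)) ->
  locally x (fun t => forall k, (k < n)%nat -> P k t).
Proof.
  induction n as [|n IH]; intros H.
  - apply filter_forall. intros; lia.
  - apply (filter_imp (fun t => (forall k, (k < n)%nat -> P k t) /\ P n t)).
    + intros t [H1 H2] k Hk. destruct (Nat.eq_dec k n) as [->|]; auto. apply H1; lia.
    + apply filter_and; [apply IH; intros; apply H|apply H]; lia.
Qed.

Lemma locally_open_interval (f : R -> R) x : continuous f x -> -1 < f x < 1 ->
  locally x (fun t => -1 < f t < 1).
Proof.
  intros Hc Hb.
  assert (He : 0 < Rmin (1 - f x) (f x + 1)) by (apply Rmin_pos; lra).
  apply (filter_imp (fun t => ball (f x) (mkposreal _ He) (f t))).
  2: apply (Hc (ball (f x) (mkposreal _ He))), locally_ball.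
  intros y Hy. unfold ball in Hy; simpl in Hy. unfold AbsRing_ball, abs, minus, plus, opp in Hy.
  simpl in Hy. apply Rabs_def2 in Hy.
  pose proof (Rmin_l (1 - f x) (f x + 1)). pose proof (Rmin_r (1 - f x) (f x + 1)). lra.
Qed.

Lemma in_W_locally n (TH PH : R -> nat -> R) x :
  (forall a b, a <> b -> continuous (fun s => qdot (TH s) (PH s) a b) x) ->
  in_W n (TH x) (PH x) -> locally x (fun s => in_W n (TH s) (PH s)).
Proof.
  intros Hc HW.
  apply (filter_imp (fun s => forall a, (a < n)%nat -> forall b, (b < n)%nat ->
                               a <> b -> -1 < qdot (TH s) (PH s) a b < 1)).
  { intros s H a b Ha Hb. apply H; auto. }
  apply locally_forall_lt. intros a Ha. apply locally_forall_lt. intros b Hb.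
  destruct (Nat.eq_dec a b) as [Heq|Hab].
  - apply filter_forall. intros s Hne. contradiction.
  - apply (filter_imp (fun s => -1 < qdot (TH s) (PH s) a b < 1)); auto.
    apply locally_open_interval; auto.
Qed.

Lemma in_W_near_th n th ph j : in_W n th ph -> locally (th j) (fun s => in_W n (upd th j s) ph).
Proof.
  intros HW. apply (in_W_locally n (fun s => upd th j s) (fun _ => ph)).
  - intros a b Hab. apply (ex_derive_continuous (fun s => qdot (upd th j s) ph a b)).
    eexists. apply is_derive_qdot_th; auto.
  - rewrite upd_same. exact HW.
Qed.

Lemma in_W_near_ph n th ph j : in_W n th ph -> locally (ph j) (fun s => in_W n th (upd ph j s)).
Proof.
  intros HW. apply (in_W_locally n (fun _ => th) (fun s => upd ph j s)).
  - intros a b Hab. apply (ex_derive_continuous (fun s => qdot th (upd ph j s) a b)).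
    eexists. apply is_derive_qdot_ph; auto.
  - rewrite upd_same. exact HW.
Qed.

Lemma is_derive_Vpot_path n m (TH PH : R -> nat -> R) x (q' : nat -> nat -> R) :
  in_W n (TH x) (PH x) ->
  (forall a b, (a < b)%nat -> (b < n)%nat -> is_derive (fun s => qdot (TH s) (PH s) a b) x (q' a b)) ->
  is_derive (fun s => Vpot n m (TH s) (PH s)) x
    (pairsum n (fun a b => m a * m b * (dcot_acos (qdot (TH x) (PH x) a b) * q' a b))).
Proof.
  intros HW Hq.
  apply (is_derive_ext (fun s => pairsum n (fun a b => m a * m b * cot_acos (qdot (TH s) (PH s) a b)))).
  { intros s. apply pairsum_ext. intros a b _ _. unfold sdist. rewrite cos_acos_div_sin_acos. reflexivity. }
  apply is_derive_pairsum. intros a b Hab Hb. apply is_derive_scal.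
  apply (is_derive_comp_R cot_acos (fun s => qdot (TH s) (PH s) a b)); auto.
  apply is_derive_cot_acos, HW; lia.
Qed.

Lemma dth_Vpot n m th ph i : in_W n th ph ->
  dth (Vpot n m) i th ph = pairsum n (fun a b => m a * m b * (dcot_acos (qdot th ph a b) * qdot_th th ph i a b)).
Proof.
  intros HW. apply is_derive_unique.
  pose proof (is_derive_Vpot_path n m (fun s => upd th i s) (fun _ => ph) (th i) (qdot_th th ph i)) as D.
  cbv beta in D. rewrite upd_same in D. apply D; auto.
  intros a b Hab _. apply is_derive_qdot_th. lia.
Qed.

Lemma dph_Vpot n m th ph i : in_W n th ph ->
  dph (Vpot n m) i th ph = pairsum n (fun a b => m a * m b * (dcot_acos (qdot th ph a b) * qdot_ph th ph i a b)).
Proof.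
  intros HW. apply is_derive_unique.
  pose proof (is_derive_Vpot_path n m (fun _ => th) (fun s => upd ph i s) (ph i) (qdot_ph th ph i)) as D.
  cbv beta in D. rewrite upd_same in D. apply D; auto.
  intros a b Hab _. apply is_derive_qdot_ph. lia.
Qed.

Lemma is_derive_grad_Vpot_path n m (TH PH : R -> nat -> R) (D : R -> nat -> nat -> R) x
    (q' D' : nat -> nat -> R) :
  in_W n (TH x) (PH x) ->
  (forall a b, (a < b)%nat -> (b < n)%nat ->
     is_derive (fun s => qdot (TH s) (PH s) a b) x (q' a b) /\ is_derive (fun s => D s a b) x (D' a b)) ->
  is_derive (fun s => pairsum n (fun a b => m a * m b * (dcot_acos (qdot (TH s) (PH s) a b) * D s a b))) x
    (pairsum n (fun a b => m a * m b *
       (d2cot_acos (qdot (TH x) (PH x) a b) * q' a b * D x a b + dcot_acos (qdot (TH x) (PH x) a b) * D' a b))).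
Proof.
  intros HW H. apply is_derive_pairsum. intros a b Hab Hb. apply is_derive_scal.
  destruct (H a b Hab Hb) as [Hq HD].
  apply (is_derive_mult (fun s => dcot_acos (qdot (TH s) (PH s) a b)) (fun s => D s a b)); auto.
  - apply (is_derive_comp_R dcot_acos (fun s => qdot (TH s) (PH s) a b)); auto.
    apply is_derive_dcot_acos, HW; lia.
  - intros; apply Rmult_comm.
Qed.

(** * Hessian at an equatorial configuration *)

Definition equator : nat -> R := fun _ => PI / 2.

Lemma qdot_equator ph a b : qdot equator ph a b = cos (ph a - ph b).
Proof. rewrite qdot_spherical. unfold equator. rewrite sin_PI2, cos_PI2. ring. Qed.

Lemma qdot_th_equator ph i a b : qdot_th equator ph i a b = 0.
Proof. unfold qdot_th, equator. rewrite sin_PI2, cos_PI2. ring. Qed.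

Lemma qdot_ph_equator ph i a b :
  qdot_ph equator ph i a b = (kron b i - kron a i) * sin (ph a - ph b).
Proof. unfold qdot_ph, equator. rewrite sin_PI2. ring. Qed.

Definition qdot_thth (ph : nat -> R) (i j a b : nat) : R :=
  (kron a i * kron b j + kron b i * kron a j)
  - (kron a i * kron a j + kron b i * kron b j) * cos (ph a - ph b).

Definition qdot_phph (ph : nat -> R) (i j a b : nat) : R :=
  - ((kron a i - kron b i) * (kron a j - kron b j)) * cos (ph a - ph b).

Ltac destruct_kron a b i j :=
  unfold kron; destruct (Nat.eqb_spec a i); destruct (Nat.eqb_spec b i);
  destruct (Nat.eqb_spec a j); destruct (Nat.eqb_spec b j); subst; try lia.

Lemma is_derive_qdot_th_th ph i j a b : a <> b ->
  is_derive (fun t => qdot_th (upd equator j t) ph i a b) (PI / 2) (qdot_thth ph i j a b).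
Proof.
  intros Hab. unfold qdot_th, qdot_thth, upd, equator.
  destruct_kron a b i j; auto_derive; auto; rewrite ?sin_PI2, ?cos_PI2; ring.
Qed.

Lemma is_derive_qdot_ph_ph ph i j a b : a <> b ->
  is_derive (fun t => qdot_ph equator (upd ph j t) i a b) (ph j) (qdot_phph ph i j a b).
Proof.
  intros Hab. unfold qdot_ph, qdot_phph, upd, equator.
  destruct_kron a b i j; auto_derive; auto; rewrite ?sin_PI2; unfold Rminus; ring.
Qed.

Lemma is_derive_qdot_ph_th ph i j a b : a <> b ->
  is_derive (fun t => qdot_ph (upd equator j t) ph i a b) (PI / 2) 0.
Proof.
  intros Hab. unfold qdot_ph, upd, equator.
  destruct_kron a b i j; auto_derive; auto; rewrite ?sin_PI2, ?cos_PI2; ring.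
Qed.

Lemma cos_sub_comm x y : cos (x - y) = cos (y - x).
Proof. rewrite <- cos_neg. f_equal. ring. Qed.

Lemma sin_sub_comm x y : sin (x - y) = - sin (y - x).
Proof. rewrite <- sin_neg. f_equal. ring. Qed.

Lemma cos_sdist_equator ph a b : cos (sdist equator ph a b) = cos (ph a - ph b).
Proof. unfold sdist. rewrite qdot_equator, cos_acos; [reflexivity|apply COS_bound]. Qed.

Lemma in_W_equator_cos n ph a b : in_W n equator ph -> (a < n)%nat -> (b < n)%nat -> a <> b ->
  -1 < cos (ph a - ph b) < 1.
Proof. intros HW Ha Hb Hab. rewrite <- qdot_equator. apply HW; auto. Qed.

Lemma inv_sin_sdist_equator n ph a b : in_W n equator ph -> (a < n)%nat -> (b < n)%nat -> a <> b ->
  / sin (sdist equator ph a b) ^ 3 = dcot_acos (cos (ph a - ph b)).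
Proof.
  intros HW Ha Hb Hab. unfold sdist. rewrite qdot_equator.
  apply inv_sin_acos_cube, (in_W_equator_cos n); auto.
Qed.

Lemma pairsum_hessian_theta n m phi0 i j : in_W n equator phi0 -> (i < n)%nat -> (j < n)%nat ->
  pairsum n (fun a b => m a * m b * (dcot_acos (cos (phi0 a - phi0 b)) * qdot_thth phi0 i j a b))
  = Hexp n m (sdist equator phi0) i j.
Proof.
  intros HW Hi Hj. rewrite (pairsum_star n i); [|exact Hi| |].
  - rewrite (sumR_ext _ _ (fun l => if Nat.eqb l i then 0 else
        (kron l j - kron i j * cos (sdist equator phi0 i l)) * Hoff m (sdist equator phi0) i l)).
    + rewrite sumR_star_kron by auto. unfold Hexp. destruct (Nat.eqb i j); [|reflexivity].
      f_equal. apply sumR_ext. intros l _. destruct (Nat.eqb l i); ring.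
    + intros l Hl. destruct (Nat.eqb_spec l i) as [|Hli]; [reflexivity|].
      unfold Hoff, qdot_thth, Rdiv.
      rewrite cos_sdist_equator, (inv_sin_sdist_equator n), kron_refl, (kron_neq l i) by auto.
      ring.
  - intros a b. unfold qdot_thth. rewrite (cos_sub_comm (phi0 a)). ring.
  - intros a b Hai Hbi. unfold qdot_thth. rewrite (kron_neq a i), (kron_neq b i) by auto. ring.
Qed.

Lemma pairsum_hessian_phi n m phi0 i j : in_W n equator phi0 -> (i < n)%nat -> (j < n)%nat ->
  pairsum n (fun a b => m a * m b *
    (d2cot_acos (cos (phi0 a - phi0 b)) * ((kron b j - kron a j) * sin (phi0 a - phi0 b))
       * ((kron b i - kron a i) * sin (phi0 a - phi0 b))
     + dcot_acos (cos (phi0 a - phi0 b)) * qdot_phph phi0 i j a b))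
  = Gexp n m (sdist equator phi0) i j.
Proof.
  intros HW Hi Hj. rewrite (pairsum_star n i); [|exact Hi| |].
  - rewrite (sumR_ext _ _ (fun l => if Nat.eqb l i then 0 else
        (kron l j - kron i j * 1) * Goff m (sdist equator phi0) i l)).
    + rewrite sumR_star_kron by auto. unfold Gexp. destruct (Nat.eqb i j); [|reflexivity].
      f_equal. apply sumR_ext. intros l _. destruct (Nat.eqb l i); ring.
    + intros l Hl. destruct (Nat.eqb_spec l i) as [|Hli]; [reflexivity|].
      unfold Goff, qdot_phph, Rdiv.
      rewrite cos_sdist_equator, (inv_sin_sdist_equator n), kron_refl, (kron_neq l i) by auto.
      pose proof (in_W_equator_cos n phi0 i l HW Hi Hl (not_eq_sym Hli)) as Hc.
      pose proof (sin2_cos2 (phi0 i - phi0 l)) as Hsc. unfold Rsqr in Hsc.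
      set (c := cos (phi0 i - phi0 l)) in *. set (s := sin (phi0 i - phi0 l)) in *.
      transitivity (m i * m l * (kron l j - kron i j) * (dcot_acos c * c - d2cot_acos c * (1 - c * c))).
      * replace (1 - c * c) with (s * s) by lra. ring.
      * rewrite d2cot_acos_mul by auto. ring.
  - intros a b. unfold qdot_phph.
    rewrite (cos_sub_comm (phi0 a)), (sin_sub_comm (phi0 a)). ring.
  - intros a b Hai Hbi. unfold qdot_phph. rewrite (kron_neq a i), (kron_neq b i) by auto. ring.
Qed.

Lemma hessian_theta n m phi0 i j : in_W n equator phi0 -> (i < n)%nat -> (j < n)%nat ->
  is_derive (fun t => dth (Vpot n m) i (upd equator j t) phi0) (equator j)
    (Hexp n m (sdist equator phi0) i j).
Proof.
  intros HW Hi Hj.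
  apply (is_derive_ext_loc (fun t => pairsum n (fun a b => m a * m b *
    (dcot_acos (qdot (upd equator j t) phi0 a b) * qdot_th (upd equator j t) phi0 i a b)))).
  { apply (filter_imp (fun t => in_W n (upd equator j t) phi0)).
    - intros t Ht. symmetry. apply dth_Vpot, Ht.
    - apply in_W_near_th, HW. }
  pose proof (is_derive_grad_Vpot_path n m (fun t => upd equator j t) (fun _ => phi0)
    (fun t => qdot_th (upd equator j t) phi0 i) (equator j) (qdot_th equator phi0 j) (qdot_thth phi0 i j)) as D.
  cbv beta in D. rewrite upd_same in D.
  apply (is_derive_eq _ _ _ _ (D HW ltac:(intros a b Hab Hb; split;
    [apply is_derive_qdot_th | apply is_derive_qdot_th_th]; lia))).
  rewrite <- pairsum_hessian_theta by auto. apply pairsum_ext. intros a b _ _.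
  rewrite qdot_equator, !qdot_th_equator. ring.
Qed.

Lemma hessian_phi n m phi0 i j : in_W n equator phi0 -> (i < n)%nat -> (j < n)%nat ->
  is_derive (fun t => dph (Vpot n m) i equator (upd phi0 j t)) (phi0 j)
    (Gexp n m (sdist equator phi0) i j).
Proof.
  intros HW Hi Hj.
  apply (is_derive_ext_loc (fun t => pairsum n (fun a b => m a * m b *
    (dcot_acos (qdot equator (upd phi0 j t) a b) * qdot_ph equator (upd phi0 j t) i a b)))).
  { apply (filter_imp (fun t => in_W n equator (upd phi0 j t))).
    - intros t Ht. symmetry. apply dph_Vpot, Ht.
    - apply in_W_near_ph, HW. }
  pose proof (is_derive_grad_Vpot_path n m (fun _ => equator) (fun t => upd phi0 j t)
    (fun t => qdot_ph equator (upd phi0 j t) i) (phi0 j) (qdot_ph equator phi0 j) (qdot_phph phi0 i j)) as D.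
  cbv beta in D. rewrite upd_same in D.
  apply (is_derive_eq _ _ _ _ (D HW ltac:(intros a b Hab Hb; split;
    [apply is_derive_qdot_ph | apply is_derive_qdot_ph_ph]; lia))).
  rewrite <- pairsum_hessian_phi by auto. apply pairsum_ext. intros a b _ _.
  rewrite qdot_equator, !qdot_ph_equator. reflexivity.
Qed.

Lemma hessian_theta_phi n m phi0 i j : in_W n equator phi0 ->
  is_derive (fun t => dth (Vpot n m) i equator (upd phi0 j t)) (phi0 j) 0.
Proof.
  intros HW. apply (is_derive_ext_loc (fun _ => 0)); [|apply (is_derive_const 0)].
  apply (filter_imp (fun t => in_W n equator (upd phi0 j t))).
  - intros t Ht. rewrite dth_Vpot by exact Ht. symmetry. apply pairsum_eq0.
    intros a b _ _. rewrite qdot_th_equator. ring.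
  - apply in_W_near_ph, HW.
Qed.

Lemma hessian_phi_theta n m phi0 i j : in_W n equator phi0 ->
  is_derive (fun t => dph (Vpot n m) i (upd equator j t) phi0) (equator j) 0.
Proof.
  intros HW.
  apply (is_derive_ext_loc (fun t => pairsum n (fun a b => m a * m b *
    (dcot_acos (qdot (upd equator j t) phi0 a b) * qdot_ph (upd equator j t) phi0 i a b)))).
  { apply (filter_imp (fun t => in_W n (upd equator j t) phi0)).
    - intros t Ht. symmetry. apply dph_Vpot, Ht.
    - apply in_W_near_th, HW. }
  pose proof (is_derive_grad_Vpot_path n m (fun t => upd equator j t) (fun _ => phi0)
    (fun t => qdot_ph (upd equator j t) phi0 i) (equator j) (qdot_th equator phi0 j) (fun _ _ => 0)) as D.
  cbv beta in D. rewrite upd_same in D.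
  apply (is_derive_eq _ _ _ _ (D HW ltac:(intros a b Hab Hb; split;
    [apply is_derive_qdot_th | apply is_derive_qdot_ph_th]; lia))).
  apply pairsum_eq0. intros a b _ _. rewrite qdot_th_equator. ring.
Qed.

(** * Jacobian of the rotating system *)

Lemma block_div_mod n q i : (i < n)%nat -> Nat.div (q * n + i) n = q /\ Nat.modulo (q * n + i) n = i.
Proof.
  intros Hi. split.
  - symmetry. apply (Nat.div_unique _ _ _ i); lia.
  - symmetry. apply (Nat.mod_unique _ _ q); lia.
Qed.

Lemma block_inj n q q' i j : (i < n)%nat -> (j < n)%nat -> (q * n + i = q' * n + j)%nat -> q = q' /\ i = j.
Proof.
  intros Hi Hj E.
  destruct (block_div_mod n q i Hi) as [Hq Hi'], (block_div_mod n q' j Hj) as [Hq' Hj'].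
  rewrite E in Hq, Hi'. split; congruence.
Qed.

Lemma block_decomp n k : n <> 0%nat -> k = (Nat.div k n * n + Nat.modulo k n)%nat.
Proof. intros Hn. rewrite Nat.mul_comm. apply Nat.div_mod, Hn. Qed.

Lemma upd_shift_block (X : nat -> R) (n q q' i j : nat) (t : R) : (i < n)%nat -> (j < n)%nat ->
  upd X (q' * n + j)%nat (X (q' * n + j)%nat + t) (q * n + i)%nat
  = X (q * n + i)%nat + kron q q' * kron i j * t.
Proof.
  intros Hi Hj. unfold upd. destruct (Nat.eqb_spec (q * n + i) (q' * n + j)) as [E|E].
  - destruct (block_inj n q q' i j Hi Hj E) as [-> ->]. rewrite !kron_refl. ring.
  - unfold kron. destruct (Nat.eqb_spec q q'); destruct (Nat.eqb_spec i j); subst; [contradiction|ring..].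
Qed.

Definition rest_point (n : nat) (m phi0 : nat -> R) (w : R) (k : nat) : R :=
  match Nat.div k n with
  | 0%nat => PI / 2
  | 1%nat => phi0 (Nat.modulo k n)
  | 2%nat => 0
  | 3%nat => w * m (Nat.modulo k n)
  | _ => 0
  end.

Lemma rest_point_block n m phi0 w q i : (i < n)%nat ->
  rest_point n m phi0 w (q * n + i)%nat =
  match q with 0%nat => PI / 2 | 1%nat => phi0 i | 2%nat => 0 | 3%nat => w * m i | _ => 0 end.
Proof. intros Hi. unfold rest_point. destruct (block_div_mod n q i Hi) as [-> ->]. reflexivity. Qed.

Definition perturbed (n : nat) (m phi0 : nat -> R) (w : R) (q' j : nat) (t : R) : nat -> R :=
  upd (rest_point n m phi0 w) (q' * n + j) (rest_point n m phi0 w (q' * n + j)%nat + t).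

Lemma perturbed_block n m phi0 w q q' i j t : (i < n)%nat -> (j < n)%nat ->
  perturbed n m phi0 w q' j t (q * n + i)%nat =
  match q with 0%nat => PI / 2 | 1%nat => phi0 i | 2%nat => 0 | 3%nat => w * m i | _ => 0 end
  + kron q q' * kron i j * t.
Proof. intros Hi Hj. unfold perturbed. rewrite upd_shift_block, rest_point_block; auto. Qed.

Lemma perturbed_angles n m phi0 w q' j t : (j < n)%nat ->
  (forall k, (k < n)%nat -> thetas n (perturbed n m phi0 w q' j t) k = upd equator j (PI / 2 + kron 0 q' * t) k) /\
  (forall k, (k < n)%nat -> phis n (perturbed n m phi0 w q' j t) k = upd phi0 j (phi0 j + kron 1 q' * t) k).
Proof.
  intros Hj. split; intros k Hk.
  - change (thetas n _ k) with (perturbed n m phi0 w q' j t (0 * n + k)%nat).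
    rewrite perturbed_block by auto. unfold upd, equator.
    destruct (Nat.eqb_spec k j); subst; [rewrite kron_refl|rewrite (kron_neq k j) by auto]; ring.
  - unfold phis. replace (n + k)%nat with (1 * n + k)%nat by lia.
    rewrite perturbed_block by auto. unfold upd.
    destruct (Nat.eqb_spec k j); subst; [rewrite kron_refl|rewrite (kron_neq k j) by auto]; ring.
Qed.

Lemma rotfield_block n m w Y q i : (i < n)%nat ->
  rotfield n m w Y (q * n + i)%nat =
  match q with
  | 0%nat => pths n Y i / m i
  | 1%nat => pphs n Y i / (m i * sin (thetas n Y i) ^ 2) - w
  | 2%nat => pphs n Y i ^ 2 * cos (thetas n Y i) / (m i * sin (thetas n Y i) ^ 3)
             - dth (Upot n m) i (thetas n Y) (phis n Y)
  | 3%nat => - dph (Upot n m) i (thetas n Y) (phis n Y)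
  | _ => 0
  end.
Proof. intros Hi. unfold rotfield. destruct (block_div_mod n q i Hi) as [-> ->]. reflexivity. Qed.

Lemma Lblock_block n m d w q q' i j : (i < n)%nat -> (j < n)%nat ->
  Lblock n m d w (q * n + i)%nat (q' * n + j)%nat =
  match q, q' with
  | 0%nat, 2%nat => kron i j / m i
  | 1%nat, 3%nat => kron i j / m i
  | 2%nat, 0%nat => Hexp n m d i j - w ^ 2 * (kron i j * m i)
  | 3%nat, 1%nat => Gexp n m d i j
  | _, _ => 0
  end.
Proof.
  intros Hi Hj. unfold Lblock.
  destruct (block_div_mod n q i Hi) as [-> ->], (block_div_mod n q' j Hj) as [-> ->].
  unfold kron. destruct q as [|[|[|[|q]]]], q' as [|[|[|[|q']]]]; try reflexivity;
    destruct (Nat.eqb i j); unfold Rdiv; ring.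
Qed.

Lemma Vpot_ext n m th ph th' ph' : (forall k, (k < n)%nat -> th k = th' k) ->
  (forall k, (k < n)%nat -> ph k = ph' k) -> Vpot n m th ph = Vpot n m th' ph'.
Proof.
  intros Hth Hph. apply pairsum_ext. intros a b Hab Hb.
  unfold sdist, qdot. rewrite !Hth, !Hph by lia. reflexivity.
Qed.

Lemma dth_Upot_ext n m i th ph th' ph' : (i < n)%nat -> (forall k, (k < n)%nat -> th k = th' k) ->
  (forall k, (k < n)%nat -> ph k = ph' k) -> dth (Upot n m) i th ph = - dth (Vpot n m) i th' ph'.
Proof.
  intros Hi Hth Hph. unfold dth, Upot. rewrite Derive_opp, Hth by auto. f_equal.
  apply Derive_ext. intros s. apply Vpot_ext; auto.
  intros k Hk. unfold upd. destruct (Nat.eqb k i); auto.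
Qed.

Lemma dph_Upot_ext n m i th ph th' ph' : (i < n)%nat -> (forall k, (k < n)%nat -> th k = th' k) ->
  (forall k, (k < n)%nat -> ph k = ph' k) -> dph (Upot n m) i th ph = - dph (Vpot n m) i th' ph'.
Proof.
  intros Hi Hth Hph. unfold dph, Upot. rewrite Derive_opp, Hph by auto. f_equal.
  apply Derive_ext. intros s. apply Vpot_ext; auto.
  intros k Hk. unfold upd. destruct (Nat.eqb k i); auto.
Qed.

Lemma is_derive_grad_Vpot_coordinate n m phi0 q' i j : in_W n equator phi0 ->
  (i < n)%nat -> (j < n)%nat ->
  let TH t := upd equator j (PI / 2 + kron 0 q' * t) in
  let PH t := upd phi0 j (phi0 j + kron 1 q' * t) in
  is_derive (fun t => dth (Vpot n m) i (TH t) (PH t)) 0 (kron 0 q' * Hexp n m (sdist equator phi0) i j) /\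
  is_derive (fun t => dph (Vpot n m) i (TH t) (PH t)) 0 (kron 1 q' * Gexp n m (sdist equator phi0) i j).
Proof.
  intros HW Hi Hj TH PH. unfold TH, PH. clear TH PH.
  destruct q' as [|[|q']].
  - rewrite kron_refl, (kron_neq 1 0) by lia. split.
    + apply (is_derive_ext (fun t => dth (Vpot n m) i (upd equator j (PI / 2 + t)) phi0)).
      { intros t. rewrite Rmult_0_l, Rplus_0_r, Rmult_1_l, (upd_same phi0). reflexivity. }
      rewrite Rmult_1_l.
      apply (is_derive_shift (fun s => dth (Vpot n m) i (upd equator j s) phi0)), hessian_theta; auto.
    + apply (is_derive_ext (fun t => dph (Vpot n m) i (upd equator j (PI / 2 + t)) phi0)).
      { intros t. rewrite Rmult_0_l, Rplus_0_r, Rmult_1_l, (upd_same phi0). reflexivity. }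
      rewrite Rmult_0_l.
      apply (is_derive_shift (fun s => dph (Vpot n m) i (upd equator j s) phi0)), hessian_phi_theta; auto.
  - rewrite (kron_neq 0 1), kron_refl by lia. split.
    + apply (is_derive_ext (fun t => dth (Vpot n m) i equator (upd phi0 j (phi0 j + t)))).
      { intros t. rewrite Rmult_0_l, Rplus_0_r, Rmult_1_l, (upd_same equator). reflexivity. }
      rewrite Rmult_0_l.
      apply (is_derive_shift (fun s => dth (Vpot n m) i equator (upd phi0 j s))), hessian_theta_phi; auto.
    + apply (is_derive_ext (fun t => dph (Vpot n m) i equator (upd phi0 j (phi0 j + t)))).
      { intros t. rewrite Rmult_0_l, Rplus_0_r, Rmult_1_l, (upd_same equator). reflexivity. }
      rewrite Rmult_1_l.
      apply (is_derive_shift (fun s => dph (Vpot n m) i equator (upd phi0 j s))), hessian_phi; auto.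
  - rewrite (kron_neq 0 (S (S q'))), (kron_neq 1 (S (S q'))), !Rmult_0_l by lia. split.
    + apply (is_derive_ext (fun _ => dth (Vpot n m) i equator phi0));
        [|apply (is_derive_const (dth (Vpot n m) i equator phi0))].
      intros t. rewrite !Rmult_0_l, !Rplus_0_r, (upd_same equator), (upd_same phi0). reflexivity.
    + apply (is_derive_ext (fun _ => dph (Vpot n m) i equator phi0));
        [|apply (is_derive_const (dph (Vpot n m) i equator phi0))].
      intros t. rewrite !Rmult_0_l, !Rplus_0_r, (upd_same equator), (upd_same phi0). reflexivity.
Qed.

Lemma is_derive_grad_Upot_perturbed n m phi0 w q' i j : in_W n equator phi0 ->
  (i < n)%nat -> (j < n)%nat ->
  let Y t := perturbed n m phi0 w q' j t in
  is_derive (fun t => dth (Upot n m) i (thetas n (Y t)) (phis n (Y t))) 0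
    (- (kron 0 q' * Hexp n m (sdist equator phi0) i j)) /\
  is_derive (fun t => dph (Upot n m) i (thetas n (Y t)) (phis n (Y t))) 0
    (- (kron 1 q' * Gexp n m (sdist equator phi0) i j)).
Proof.
  intros HW Hi Hj Y.
  destruct (is_derive_grad_Vpot_coordinate n m phi0 q' i j HW Hi Hj) as [HdthV HdphV].
  split.
  - apply (is_derive_ext (fun t => - dth (Vpot n m) i (upd equator j (PI / 2 + kron 0 q' * t))
                                       (upd phi0 j (phi0 j + kron 1 q' * t)))).
    + intros t. destruct (perturbed_angles n m phi0 w q' j t Hj) as [Hth Hph].
      symmetry. apply dth_Upot_ext; auto.
    + apply is_derive_neg, HdthV.
  - apply (is_derive_ext (fun t => - dph (Vpot n m) i (upd equator j (PI / 2 + kron 0 q' * t))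
                                       (upd phi0 j (phi0 j + kron 1 q' * t)))).
    + intros t. destruct (perturbed_angles n m phi0 w q' j t Hj) as [Hth Hph].
      symmetry. apply dph_Upot_ext; auto.
    + apply is_derive_neg, HdphV.
Qed.

Ltac entries_by_cases q i j :=
  destruct q as [|[|[|[|q]]]]; try lia; unfold kron; cbn [Nat.eqb];
  destruct (Nat.eqb i j); field; lra.

Lemma jacobian_entry n m phi0 w q q' i j : (forall k, (k < n)%nat -> 0 < m k) ->
  in_W n equator phi0 -> (q < 4)%nat -> (q' < 4)%nat -> (i < n)%nat -> (j < n)%nat ->
  is_derive (fun t => rotfield n m w (perturbed n m phi0 w q' j t) (q * n + i)) 0
    (Lblock n m (sdist equator phi0) w (q * n + i) (q' * n + j)).
Proof.
  intros Hm HW Hq Hq' Hi Hj. pose proof (Hm i Hi) as Hmi.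
  set (Y t := perturbed n m phi0 w q' j t).
  assert (Hthi : forall t, thetas n (Y t) i = PI / 2 + kron 0 q' * kron i j * t)
    by (intros t; exact (perturbed_block n m phi0 w 0 q' i j t Hi Hj)).
  assert (Hpt : forall t, pths n (Y t) i = 0 + kron 2 q' * kron i j * t)
    by (intros t; exact (perturbed_block n m phi0 w 2 q' i j t Hi Hj)).
  assert (Hpp : forall t, pphs n (Y t) i = w * m i + kron 3 q' * kron i j * t)
    by (intros t; exact (perturbed_block n m phi0 w 3 q' i j t Hi Hj)).
  destruct (is_derive_grad_Upot_perturbed n m phi0 w q' i j HW Hi Hj) as [HdthU HdphU].
  rewrite Lblock_block by auto.
  destruct q as [|[|[|[|q]]]]; try lia.
  - apply (is_derive_ext (fun t => (0 + kron 2 q' * kron i j * t) / m i)).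
    { intros t. rewrite rotfield_block, Hpt by auto. reflexivity. }
    apply (is_derive_eq _ _ (kron 2 q' * kron i j / m i)).
    + auto_derive; auto. field. lra.
    + entries_by_cases q' i j.
  - apply (is_derive_ext (fun t => (w * m i + kron 3 q' * kron i j * t)
                                   / (m i * sin (PI / 2 + kron 0 q' * kron i j * t) ^ 2) - w)).
    { intros t. rewrite rotfield_block, Hpp, Hthi by auto. reflexivity. }
    apply (is_derive_eq _ _ (kron 3 q' * kron i j / m i)).
    + auto_derive; rewrite ?Rmult_0_r, ?Rplus_0_r, ?sin_PI2, ?cos_PI2;
        [apply Rgt_not_eq; lra | field; lra].
    + entries_by_cases q' i j.
  - apply (is_derive_ext (fun t => (w * m i + kron 3 q' * kron i j * t) ^ 2
                                   * cos (PI / 2 + kron 0 q' * kron i j * t)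
                                   / (m i * sin (PI / 2 + kron 0 q' * kron i j * t) ^ 3)
                                   - dth (Upot n m) i (thetas n (Y t)) (phis n (Y t)))).
    { intros t. rewrite rotfield_block, Hpp, Hthi by auto. reflexivity. }
    apply (is_derive_eq _ _ (- w ^ 2 * m i * (kron 0 q' * kron i j)
                             - - (kron 0 q' * Hexp n m (sdist equator phi0) i j))).
    + apply is_derive_sub; [|exact HdthU].
      auto_derive; rewrite ?Rmult_0_r, ?Rplus_0_r, ?sin_PI2, ?cos_PI2;
        [apply Rgt_not_eq; lra | field; lra].
    + entries_by_cases q' i j.
  - apply (is_derive_ext (fun t => - dph (Upot n m) i (thetas n (Y t)) (phis n (Y t)))).
    { intros t. rewrite rotfield_block by auto. reflexivity. }
    apply (is_derive_eq _ _ _ _ (is_derive_neg _ _ _ HdphU)).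
    entries_by_cases q' i j.
Qed.

Theorem lemma1 (n : nat) (m : nat -> R) (phi0 : nat -> R) (w : R) :
  (3 <= n)%nat ->
  (forall i, (i < n)%nat -> 0 < m i) ->
  (* the equatorial configuration lies in W ... *)
  (forall i j, (i < n)%nat -> (j < n)%nat -> i <> j ->
     sdist (fun _ => PI / 2) phi0 i j <> 0 /\ sdist (fun _ => PI / 2) phi0 i j <> PI) ->
  (* ... and is a critical point of V *)
  (forall i, (i < n)%nat ->
     is_derive (fun s => Vpot n m (upd (fun _ => PI / 2) i s) phi0) (PI / 2) 0 /\
     is_derive (fun s => Vpot n m (fun _ => PI / 2) (upd phi0 i s)) (phi0 i) 0) ->
  let th0 := fun _ : nat => PI / 2 in
  let d := sdist th0 phi0 in
  let X := fun k : nat =>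
    match Nat.div k n with
    | 0%nat => PI / 2
    | 1%nat => phi0 (Nat.modulo k n)
    | 2%nat => 0
    | 3%nat => w * m (Nat.modulo k n)
    | _ => 0
    end in
  (* H and G (Hessians of V in theta and in phi) have the stated entries *)
  (forall i j, (i < n)%nat -> (j < n)%nat ->
     is_derive (fun t => dth (Vpot n m) i (upd th0 j t) phi0) (th0 j) (Hexp n m d i j) /\
     is_derive (fun t => dph (Vpot n m) i th0 (upd phi0 j t)) (phi0 j) (Gexp n m d i j)) /\
  (* the Jacobian of the rotating vector field at X_w is the block matrix L *)
  (forall k l, (k < 4 * n)%nat -> (l < 4 * n)%nat ->
     is_derive (fun t => rotfield n m w (upd X l (X l + t)) k) 0 (Lblock n m d w k l)).
Proof.
  intros _ Hm HW _ th0 d X.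
  assert (HWe : in_W n equator phi0) by (apply in_W_of_sdist, HW).
  split.
  - intros i j Hi Hj. split; [apply hessian_theta | apply hessian_phi]; auto.
  - intros k l Hk Hl.
    assert (Hn : n <> 0%nat) by lia.
    rewrite (block_decomp n k), (block_decomp n l) by exact Hn.
    apply jacobian_entry; auto;
      solve [apply Nat.Div0.div_lt_upper_bound; lia | apply Nat.mod_upper_bound, Hn].
Qed.
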